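(* For integers $n \geq 3$ and $m \geq 1$, $$\chi_\rho(FSSD_m(C_n)) = \begin{cases} 3, & n \text{ even},\\ 4, & n \text{ odd}.\end{cases}$$
   Context: All graphs are finite and simple. $C_n$ is the cycle on $n$ vertices. For a positive integer $i$, an $i$-packing in a graph is a set of vertices any two distinct members of which are at distance greater than $i$. The packing chromatic number $\chi_\rho(H)$ is the smallest integer $k$ such that $V(H)$ can be partitioned into sets $V_1,\dots,V_k$ with each $V_i$ an $i$-packing. For a positive integer $m$, $FSSD_m(G)$ is obtained from $G$ by replacing each edge $uv$ of $G$ by a copy of $K_{2,m}$: the edge $uv$ is deleted and $m$ new vertices are added, each adjacent to exactly $u$ and $v$. *)

From mathcomp Require Import all_boot.
Set Implicit Arguments. Unset Strict Implicit. Unset Printing Implicit Defensive.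

(* A finite simple graph is a symmetric irreflexive relation [e : rel T] on a finType T. *)

Fixpoint within (T : finType) (e : rel T) (k : nat) (x y : T) : bool :=
  match k with
  | 0 => x == y
  | k'.+1 => within e k' x y || [exists z, within e k' x z && e z y]
  end.

Definition is_packing (T : finType) (e : rel T) (i : nat) (S : {set T}) : bool :=
  [forall x in S, forall y in S, (x != y) ==> ~~ within e i x y].

(* A packing k-colouring: c x = j (j : 'I_k) means x is in V_{j+1};
   each class V_i must be an i-packing. *)
Definition packing_coloring (T : finType) (e : rel T) (k : nat) (c : T -> 'I_k) : bool :=
  [forall j : 'I_k, is_packing e j.+1 [set x | c x == j]].

Definition has_packing_coloring (T : finType) (e : rel T) (k : nat) : bool :=
  [exists c : {ffun T -> 'I_k}, packing_coloring e c].

Lemma has_packing_coloring_card (T : finType) (e : rel T) :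
  exists k, has_packing_coloring e k.
Proof.
exists #|T|; apply/existsP; exists [ffun x => enum_rank x].
apply/forallP => j; apply/forallP => x; apply/implyP => Hx.
apply/forallP => y; apply/implyP => Hy; apply/implyP => Hxy.
move: Hx Hy; rewrite !inE !ffunE => /eqP Hx /eqP Hy.
by move: Hxy; rewrite -(enum_rankK x) -(enum_rankK y) Hx Hy eqxx.
Qed.

Definition pchi (T : finType) (e : rel T) : nat :=
  ex_minn (has_packing_coloring_card e).

Definition cycle_rel (n : nat) : rel 'I_n :=
  fun i j => (j == (i.+1 %% n) :> nat) || (i == (j.+1 %% n) :> nat).

Definition is_edge (T : finType) (e : rel T) (S : {set T}) : bool :=
  [exists x, exists y, e x y && (S == [set x; y])].

Definition edge_of (T : finType) (e : rel T) := {S : {set T} | is_edge e S}.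

(* FSSD_m(G): vertices V(G) + E(G) x 'I_m ; new vertex (uv, j) adjacent exactly to u and v. *)
Definition fssd_vtx (T : finType) (e : rel T) (m : nat) : finType :=
  (T + (edge_of e * 'I_m))%type.

Definition fssd (T : finType) (e : rel T) (m : nat) : rel (fssd_vtx e m) :=
  fun a b => match a, b with
  | inl x, inr (s, _) => x \in val s
  | inr (s, _), inl x => x \in val s
  | _, _ => false
  end.

From mathcomp Require Import all_boot zify.
Set Implicit Arguments. Unset Strict Implicit. Unset Printing Implicit Defensive.

(* Upper bound: original vertices are at even distance in FSSD_m(G), twice their
   distance in G, and subdivision vertices are pairwise non-adjacent.  So giving
   every subdivision vertex colour 1 and colouring C_n properly with 2 and 3
   (plus a single 4 when n is odd) is a packing colouring.
   Lower bound: v_0, s_0, v_1, s_1, ..., with s_i a subdivision vertex of v_i v_(i+1),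
   is a closed walk of length 2n along which vertices up to 3 steps apart are
   distinct.  With colours 1, 2, 3 only, colour 1 must then occupy every other
   position of the walk and the n remaining positions must alternate between 2
   and 3, which is impossible for n odd.  Two colours never suffice. *)

Section Packing.
Variables (T : finType) (e : rel T).

Lemma within_mono k k' x y : k <= k' -> within e k x y -> within e k' x y.
Proof.
move=> /subnK <-; elim: (k' - k) => [|d IH] // /IH w.
by rewrite addSn /= w.
Qed.

Lemma within_path k x y :
  within e k x y -> exists p, [/\ size p <= k, path e x p & last x p = y].
Proof.
elim: k y => [|k IH] y /=; first by move/eqP=> <-; exists [::].
case/orP=> [/IH [p [size_p e_p <-]] | /existsP [z /andP [/IH [p [size_p e_p zE] ezy]]]].
  by exists p; split=> //; apply: leqW.
by exists (rcons p y); rewrite size_rcons rcons_path last_rcons e_p zE ezy.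
Qed.

Lemma within_walk (f : nat -> T) t d :
  (forall s, e (f s) (f s.+1)) -> within e d (f t) (f (t + d)).
Proof.
move=> ef; elim: d => [|d IH] /=; first by rewrite addn0.
by apply/orP; right; apply/existsP; exists (f (t + d)); rewrite IH addnS ef.
Qed.

Lemma packing_coloring_far K (c : T -> 'I_K) x y :
  packing_coloring e c -> x != y -> c x = c y -> ~~ within e (c x).+1 x y.
Proof.
move=> /forallP /(_ (c x)) /forallP /(_ x) /implyP pc neq_xy cxy.
have /pc /forallP /(_ y) : x \in [set z | c z == c x] by rewrite inE.
by rewrite inE cxy eqxx neq_xy.
Qed.

Lemma packing_coloring_walk K (c : T -> 'I_K) (f : nat -> T) t d :
  packing_coloring e c -> (forall s, e (f s) (f s.+1)) ->
  f t != f (t + d) -> c (f t) = c (f (t + d)) -> (c (f t)).+1 < d.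
Proof.
move=> pc ef neq_f c_eq; rewrite ltnNge; apply/negP => le_d.
have /negP[] := packing_coloring_far pc neq_f c_eq.
exact: within_mono le_d (within_walk t d ef).
Qed.

Lemma has_packing_coloring_nat K (f : T -> nat) :
  (forall x, f x < K) ->
  (forall x y, x != y -> f x = f y -> ~~ within e (f x).+1 x y) ->
  has_packing_coloring e K.
Proof.
move=> f_lt f_far; apply/existsP; exists [ffun x => Ordinal (f_lt x)].
apply/forallP => j; apply/forallP => x; apply/implyP; rewrite inE ffunE => /eqP <-.
apply/forallP => y; apply/implyP; rewrite inE !ffunE => /eqP /(congr1 val) /= fxy.
by apply/implyP => neq_xy; apply: f_far.
Qed.

Lemma pchi_eq k :
  has_packing_coloring e k -> (forall j, has_packing_coloring e j -> k <= j) ->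
  pchi e = k.
Proof.
move=> e_k k_min; rewrite /pchi; case: ex_minnP => j e_j j_min.
by apply/eqP; rewrite eqn_leq j_min // k_min.
Qed.

End Packing.

(* The colour sequence along a walk whose vertices at most 3 steps apart are
   distinct; colours are 0-based, as in [packing_coloring]. *)
Definition packing_seq (col : nat -> nat) : Prop :=
  forall t d, 0 < d <= 3 -> col t = col (t + d) -> (col t).+1 < d.

Section PackingSequence.
Variable col : nat -> nat.
Hypothesis col_packing : packing_seq col.

Let col_neq1 t : col t != col t.+1.
Proof. by apply/eqP; rewrite -addn1 => /(col_packing (isT : 0 < 1 <= 3)). Qed.

Let col_eq2 t : col t = col t.+2 -> col t = 0.
Proof. by rewrite -addn2 => /(col_packing (isT : 0 < 2 <= 3)); case: (col t). Qed.

Let col_eq3 t : col t = col t.+3 -> col t <= 1.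
Proof. by rewrite -addn3 => /(col_packing (isT : 0 < 3 <= 3)). Qed.

Lemma packing_seq_ge3 K : (forall t, col t < K) -> 3 <= K.
Proof.
move=> col_lt; rewrite leqNgt; apply/negP => K_le2.
have col_2periodic t : col t = col t.+2.
  by move: (col_lt t) (col_lt t.+1) (col_lt t.+2) (col_neq1 t) (col_neq1 t.+1); lia.
by have := col_neq1 0; rewrite (col_eq2 (col_2periodic 0)) (col_eq2 (col_2periodic 1)).
Qed.

Section ThreeColours.
Hypothesis col_lt3 : forall t, col t < 3.

Let col_pos_swap s t : 0 < col s -> 0 < col t -> col s != col t -> col t = 3 - col s.
Proof. by move: (col_lt3 s) (col_lt3 t); lia. Qed.

Let col_pos_neq2 t : 0 < col t -> col t != col t.+2.
Proof. by move=> col_t; apply/eqP => /col_eq2 col_t0; rewrite col_t0 in col_t. Qed.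

Lemma col_no_three_pos t : 0 < col t -> 0 < col t.+1 -> 0 < col t.+2 -> False.
Proof.
move=> p0 p1 p2; have /eqP[] := col_pos_neq2 p0.
rewrite (col_pos_swap p1 p2 (col_neq1 _)) (col_pos_swap p0 p1 (col_neq1 _)) subKn //.
exact/ltnW/col_lt3.
Qed.

Lemma col_no_two_pos t : 0 < col t.+2 -> 0 < col t.+3 -> False.
Proof.
move=> p2 p3.
have z1 : col t.+1 = 0.
  by case: (posnP (col t.+1)) => // p1; case: (col_no_three_pos p1 p2 p3).
have z4 : col t.+4 = 0.
  by case: (posnP (col t.+4)) => // p4; case: (col_no_three_pos p2 p3 p4).
have p0 : 0 < col t by rewrite lt0n -z1 col_neq1.
have p5 : 0 < col t.+4.+1 by rewrite lt0n -z4 eq_sym col_neq1.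
have n20 : col t.+2 != col t by rewrite eq_sym col_pos_neq2.
have n32 : col t.+3 != col t.+2 by rewrite eq_sym col_neq1.
have e03 : col t = col t.+3.
  by rewrite (col_pos_swap p2 p0 n20) (col_pos_swap p2 p3 (col_neq1 _)).
have e25 : col t.+2 = col t.+4.+1.
  by rewrite (col_pos_swap p3 p2 n32) (col_pos_swap p3 p5 (col_pos_neq2 p3)).
by move: (col_eq3 e03) (col_eq3 e25) n20 p0 p2; lia.
Qed.

Lemma col_alternate t : 0 < col t.+2 -> col t.+4 = 3 - col t.+2.
Proof.
move=> p2; have z3 : col t.+3 = 0.
  by case: (posnP (col t.+3)) => // p3; case: (col_no_two_pos p2 p3).
have p4 : 0 < col t.+4 by rewrite lt0n -z3 eq_sym col_neq1.
exact: col_pos_swap p2 p4 (col_pos_neq2 p2).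
Qed.

Lemma col_alternate_iter t k : 0 < col t.+2 ->
  col (t + k.*2).+2 = if odd k then 3 - col t.+2 else col t.+2.
Proof.
move=> p; elim: k => [|k IH]; first by rewrite addn0.
have pk : 0 < col (t + k.*2).+2 by rewrite IH; case: (odd k); rewrite // subn_gt0.
rewrite doubleS !addnS (col_alternate pk) IH /=.
case: (odd k) => //=; rewrite subKn //.
exact/ltnW/col_lt3.
Qed.

Lemma packing_seq_aperiodic N : odd N -> ~ (forall t, col (t + N.*2) = col t).
Proof.
move=> odd_N col_per.
have [p p_pos] : exists p, 0 < col p.+2.
  case: (posnP (col 2)) => [z2 | ]; last by exists 0.
  by exists 1; move: (col_neq1 2); rewrite z2 eq_sym lt0n.
by have := col_alternate_iter N p_pos; rewrite odd_N -!addSn col_per; lia.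
Qed.

End ThreeColours.

Lemma packing_seq_ge4 N K :
  odd N -> (forall t, col (t + N.*2) = col t) -> (forall t, col t < K) -> 4 <= K.
Proof.
move=> odd_N col_per col_lt; rewrite leqNgt; apply/negP => K_le3.
by apply: (packing_seq_aperiodic _ odd_N col_per) => t; apply: leq_trans (col_lt t) K_le3.
Qed.

End PackingSequence.

Section Subdivision.
Variables (T : finType) (e : rel T) (m : nat).

Lemma edge_of_mem (s : edge_of e) x y :
  x \in val s -> y \in val s -> [|| x == y, e x y | e y x].
Proof.
case: s => S /= /existsP [u /existsP [v /andP [euv /eqP ->]]].
by rewrite !inE => /orP [] /eqP -> /orP [] /eqP ->; rewrite ?eqxx ?euv ?orbT.
Qed.

Lemma fssd_within3_inl k x y : k <= 3 ->
  within (@fssd _ e m) k (inl x) (inl y) -> [|| x == y, e x y | e y x].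
Proof.
move=> k_le3 /within_path [p [size_p]].
case: p size_p => [|a [|b [|c [|d p]]]] //= size_p; last by lia.
- by move=> _ [->]; rewrite eqxx.
- by move=> /[swap] ->.
- move=> /[swap] ->; case: a => [a|[s j]] //= /and3P [x_s y_s _].
  exact: edge_of_mem x_s y_s.
- move=> /[swap] ->; case: a => [a|[s j]] //=.
  by case: b => [b|[s1 j1]]; rewrite /= !andbF.
Qed.

Lemma fssd_within1_inr a b : within (@fssd _ e m) 1 (inr a) (inr b) -> a = b.
Proof.
rewrite /= => /orP [/eqP [] // | /existsP [z /andP [/eqP <-]]].
by case: a => ? ?; case: b.
Qed.

(* Colours are 0-based: g colours the original vertices, every subdivision
   vertex gets colour 0. *)
Lemma fssd_has_packing_coloring K (g : T -> nat) :
  (forall x, 0 < g x < K) ->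
  (forall x y, e x y -> g x != g y) ->
  (forall x y, g x = g y -> 2 < g x -> x = y) ->
  has_packing_coloring (@fssd _ e m) K.
Proof.
move=> g_range g_proper g_inj.
pose f (v : fssd_vtx e m) := if v is inl x then g x else 0.
apply: (has_packing_coloring_nat (f := f)).
  move=> [x|[[S /existsP [x _]] _]] /=; first by case/andP: (g_range x).
  by move: (g_range x); lia.
case=> [x|a] [y|b] neq_xy; rewrite ?[f _]/= => f_eq; last first.
- by apply/negP => /fssd_within1_inr ab; rewrite ab eqxx in neq_xy.
- by move: (g_range y); rewrite -f_eq.
- by move: (g_range x); rewrite f_eq.
apply/negP => w.
have [g_gt2 | g_le2] := ltnP 2 (g x).
  by rewrite (g_inj _ _ f_eq g_gt2) eqxx in neq_xy.
have /or3P [/eqP xy | exy | eyx] := fssd_within3_inl (g_le2 : (g x).+1 <= 3) w.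
- by rewrite xy eqxx in neq_xy.
- by have := g_proper _ _ exy; rewrite f_eq eqxx.
- by have := g_proper _ _ eyx; rewrite f_eq eqxx.
Qed.

End Subdivision.

Section CycleColoring.
Variable n : nat.
Hypothesis n_gt1 : 1 < n.

Definition cycle_coloring (i : 'I_n) : nat :=
  if odd n && (i == n.-1 :> nat) then 3 else if odd i then 2 else 1.

Lemma cycle_coloring_range i : 0 < cycle_coloring i < if odd n then 4 else 3.
Proof. by rewrite /cycle_coloring; case: (odd n) => /=; do 2?case: ifP. Qed.

Lemma cycle_coloring_inj i j :
  cycle_coloring i = cycle_coloring j -> 2 < cycle_coloring i -> i = j.
Proof.
rewrite /cycle_coloring.
case: ifP => [/andP [_ /eqP i_max] | _]; last by case: ifP.
case: ifP => [/andP [_ /eqP j_max] _ _ | _]; last by case: ifP.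
by apply: val_inj; rewrite /= i_max j_max.
Qed.

Lemma cycle_coloring_succ (i j : 'I_n) :
  j = i.+1 %% n :> nat -> cycle_coloring i != cycle_coloring j.
Proof.
move=> j_succ; rewrite /cycle_coloring j_succ.
have := ltn_ord i; rewrite leq_eqVlt => /orP [/eqP i_max | i_lt].
  have -> : i.+1 %% n = 0 by rewrite i_max modnn.
  by do ?case: ifP; lia.
by rewrite modn_small //; do ?case: ifP; lia.
Qed.

Lemma cycle_coloring_proper i j : cycle_rel i j -> cycle_coloring i != cycle_coloring j.
Proof.
case/orP => /eqP; first exact: cycle_coloring_succ.
by rewrite eq_sym; apply: cycle_coloring_succ.
Qed.

Lemma fssd_cycle_has_packing_coloring m :
  has_packing_coloring (@fssd _ (@cycle_rel n) m) (if odd n then 4 else 3).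
Proof.
apply: (fssd_has_packing_coloring m (g := cycle_coloring)).
- exact: cycle_coloring_range.
- exact: cycle_coloring_proper.
- exact: cycle_coloring_inj.
Qed.

End CycleColoring.

Section CycleWalk.
Variables n m : nat.
Hypotheses (n_gt2 : 2 < n) (m_gt0 : 0 < m).

Definition cycle_vertex (k : nat) : 'I_n := Ordinal (ltn_pmod k (ltnW (ltnW n_gt2))).

Lemma cycle_vertex_neq k d : 0 < d < n -> cycle_vertex k != cycle_vertex (k + d).
Proof.
move=> d_range; apply/eqP => /(congr1 val) /= /eqP.
by rewrite -{1}[k]addn0 eqn_modDl mod0n modn_small; lia.
Qed.

Lemma cycle_vertex_edge k : is_edge (@cycle_rel n) [set cycle_vertex k; cycle_vertex k.+1].
Proof.
apply/existsP; exists (cycle_vertex k); apply/existsP; exists (cycle_vertex k.+1).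
by rewrite eqxx andbT /cycle_rel /= -[k.+1]addn1 -[(k %% n).+1]addn1 modnDml eqxx.
Qed.

Definition cycle_edge k : edge_of (@cycle_rel n) := Sub _ (cycle_vertex_edge k).

Definition fssd_cycle_walk (t : nat) : fssd_vtx (@cycle_rel n) m :=
  if odd t then inr (cycle_edge t./2, Ordinal m_gt0) else inl (cycle_vertex t./2).

Lemma fssd_cycle_walk_adj t : fssd (fssd_cycle_walk t) (fssd_cycle_walk t.+1).
Proof.
by rewrite /fssd_cycle_walk /= uphalf_half; case: (odd t); rewrite /= !inE eqxx ?orbT.
Qed.

Lemma fssd_cycle_walk_periodic t : fssd_cycle_walk (t + n.*2) = fssd_cycle_walk t.
Proof.
have vertex_per k : cycle_vertex (k + n) = cycle_vertex k.
  by apply: val_inj; rewrite /= modnDr.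
have edge_per k : cycle_edge (k + n) = cycle_edge k.
  by apply: val_inj; rewrite /= -addSn !vertex_per.
rewrite /fssd_cycle_walk oddD halfD !odd_double addbF andbF doubleK.
by rewrite vertex_per edge_per.
Qed.

Lemma fssd_cycle_walk_neq t d : 0 < d <= 3 -> fssd_cycle_walk t != fssd_cycle_walk (t + d).
Proof.
move=> d_range; rewrite /fssd_cycle_walk oddD.
case: (d =P 2) => [-> | d_neq2]; last first.
  have -> : odd d by lia.
  by case: (odd t).
rewrite /= addbF halfD andbF /= add0n addn1.
have neq1 := @cycle_vertex_neq t./2 1 (ltnW n_gt2).
have neq2 := @cycle_vertex_neq t./2 2 n_gt2.
case: (odd t); last by rewrite /= -addn1.
apply/eqP => -[/setP /(_ (cycle_vertex t./2))].
by rewrite !inE eqxx -[t./2.+2]addn2 -[t./2.+1]addn1 (negbTE neq1) (negbTE neq2).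
Qed.

Lemma fssd_cycle_packing_lb K :
  has_packing_coloring (@fssd _ (@cycle_rel n) m) K -> (if odd n then 4 else 3) <= K.
Proof.
case/existsP => c pc.
pose col t := val (c (fssd_cycle_walk t)).
have col_packing : packing_seq col.
  move=> t d d_range /val_inj; apply: packing_coloring_walk pc _ _.
  - exact: fssd_cycle_walk_adj.
  - exact: fssd_cycle_walk_neq.
have col_lt t : col t < K := ltn_ord _.
case: ifP => [odd_n | _]; last exact: (packing_seq_ge3 col_packing col_lt).
apply: (packing_seq_ge4 col_packing odd_n _ col_lt) => t.
by rewrite /col fssd_cycle_walk_periodic.
Qed.

End CycleWalk.

Theorem proposition7 (n m : nat) :
  3 <= n -> 1 <= m ->
  pchi (@fssd _ (@cycle_rel n) m) = (if odd n then 4 else 3).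
Proof.
move=> n_gt2 m_gt0; apply: pchi_eq.
- exact/fssd_cycle_has_packing_coloring/ltnW.
- exact: fssd_cycle_packing_lb.
Qed.
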